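(* Let $n\ge2$ and let $\phi:\mathbb{R}^n\setminus\{0\}\to\mathbb{C}$ be continuous, homogeneous and even. Assume that for every $1\le k\le n-1$, \[ \operatorname{supp}(\phi)\cap\{\xi\in\mathbb{R}^n\setminus\{0\}:\xi_k=0\}=\emptyset. \] Then the function $\psi:\mathbb{R}^{n-1}\to\mathbb{C}$, $\psi(s_1,\dots,s_{n-1})=\phi(1,s_1,s_1s_2,\dots,s_1s_2\cdots s_{n-1})$, is continuous and compactly supported, and for every $\xi\in\mathbb{R}^n$ with $\xi_k\ne0$ for all $1\le k\le n-1$ we have \[ \phi(\xi_1,\dots,\xi_n)=\psi\Big(\frac{\xi_2}{\xi_1},\frac{\xi_3}{\xi_2},\dots,\frac{\xi_n}{\xi_{n-1}}\Big). \]
   Context: A function $\phi:\mathbb{R}^n\setminus\{0\}\to\mathbb{C}$ is homogeneous if $\phi(\mu\xi)=\phi(\xi)$ for all $\mu>0$, and even if $\phi(-\xi)=\phi(\xi)$. The support $\operatorname{supp}(\phi)$ is the closure, in $\mathbb{R}^n\setminus\{0\}$, of $\{\xi\in\mathbb{R}^n\setminus\{0\}:\phi(\xi)\ne0\}$. *)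

From HB Require Import structures.
From mathcomp Require Import all_boot all_order all_algebra.
From mathcomp Require Import all_classical all_reals all_analysis.
From mathcomp Require Export complex.
Export numFieldTopology.Exports numFieldNormedType.Exports.
Import Order.TTheory GRing.Theory Num.Theory.


Local Open Scope ring_scope.
Local Open Scope classical_set_scope.
Local Open Scope complex_scope.

(* The complex numbers R[i] carry the topology induced by their norm
   (the modulus), i.e. the usual topology of C. *)
#[export] HB.instance Definition _ (R : rcfType) :=
  PseudoPointedMetric.copy (R[i]) (R[i])^o.

Section Defs.
Variable R : realType.

Definition punctured (n : nat) : set 'rV[R]_n := [set x | x != 0].

(* 0-based coordinate access by a natural number (0 outside the range). *)
Definition vcoord (n : nat) (x : 'rV[R]_n) (k : nat) : R :=
  match @insub nat (fun k => (k < n)%N) 'I_n k with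
  | Some i => x 0 i
  | None => 0
  end.

Definition homogeneous (n : nat) (phi : 'rV[R]_n -> R[i]) : Prop :=
  forall (mu : R) (xi : 'rV[R]_n), 0 < mu -> xi != 0 -> phi (mu *: xi) = phi xi.

Definition even_fun (n : nat) (phi : 'rV[R]_n -> R[i]) : Prop :=
  forall xi : 'rV[R]_n, xi != 0 -> phi (- xi) = phi xi.

(* supp phi: closure, inside R^n \ {0}, of {xi != 0 | phi xi != 0}
   (relative closure = ambient closure intersected with R^n \ {0}). *)
Definition supp (n : nat) (phi : 'rV[R]_n -> R[i]) : set 'rV[R]_n :=
  punctured n `&` closure [set xi | xi != 0 /\ phi xi != 0].

(* psi(s_1,...,s_{n-1}) = phi(1, s_1, s_1 s_2, ..., s_1 ... s_{n-1}):
   coordinate j (0-based) is the product of s_i over i < j. *)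
Definition psi_of (n : nat) (phi : 'rV[R]_n -> R[i]) : 'rV[R]_n.-1 -> R[i] :=
  fun s => phi (\row_(j < n) \prod_(i < n.-1 | (i < j)%N) s 0 i).

(* (xi_2/xi_1, ..., xi_n/xi_{n-1}) in 0-based indexing *)
Definition ratios (n : nat) (xi : 'rV[R]_n) : 'rV[R]_n.-1 :=
  \row_(i < n.-1) (vcoord n xi i.+1 / vcoord n xi i).

End Defs.

Arguments punctured {R} n.
Arguments vcoord {R n} x k.
Arguments homogeneous {R n} phi.
Arguments even_fun {R n} phi.
Arguments supp {R n} phi.
Arguments psi_of {R n} phi s.
Arguments ratios {R n} xi.

(* psi is phi composed with the continuous map
   cumprod : s |-> (1, s_1, s_1 s_2, ..., s_1 ... s_(n-1)), which never vanishes.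
   The normalised support of phi, closure {phi <> 0} intersected with the unit
   sphere, is compact and by hypothesis avoids the hyperplanes xi_k = 0
   (1 <= k <= n-1), so |w_k| >= d_k > 0 on it.  If psi s <> 0 then, by homogeneity,
   cumprod s / |cumprod s| lies there, and s_k = cumprod_(k+1) / cumprod_k
   gives |s_k| <= 1 / d_k: the support of psi lies in a box.  Finally
   cumprod (ratios xi) = xi / xi_1, which phi cannot tell apart from xi since
   it is homogeneous and even. *)
From HB Require Import structures.
From mathcomp Require Import all_boot all_order all_algebra.
From mathcomp Require Import all_classical all_reals all_analysis.
From mathcomp Require Import complex.
Import numFieldTopology.Exports numFieldNormedType.Exports.
Import Order.TTheory GRing.Theory Num.Theory.
Local Open Scope ring_scope.
Local Open Scope classical_set_scope.
Local Open Scope complex_scope.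

Lemma continuous_mx {T U : topologicalType} {m n} (f : T -> 'M[U]_(m, n)) :
  (forall i j, continuous (fun x => f x i j)) -> continuous f.
Proof.
move=> fc x A [P Pnbhs PA]; apply: filterS PA _.
apply: (@filter_forall _ _ (fun i y => forall j, P i j (f y i j))) => i.
by apply: filter_forall => j; exact: fc (Pnbhs i j).
Qed.

Lemma continuous_within_comp {T U V : topologicalType} {A : set U}
    {f : U -> V} {g : T -> U} :
  {within A, continuous f} -> continuous g -> (forall x, A (g x)) ->
  continuous (f \o g).
Proof.
move=> /subspace_continuousP fc gc gA x.
apply: cvg_comp (fc _ (gA x)) => B /(gc x).
by apply: (@filterS _ (nbhs x)) => t; apply; exact: gA.
Qed.

Lemma compact_abs_bounded_below {R : realType} {T : topologicalType}
    {K : set T} {f : T -> R} :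
  compact K -> continuous f -> (forall x, K x -> f x != 0) ->
  exists2 d, 0 < d & forall x, K x -> d <= `|f x|.
Proof.
move=> cK fc f0; have [->|/set0P K0] := eqVneq K set0; first by exists 1.
have [c /set_mem Kc cmin] := compact_EVT_min K0 cK
  (continuous_subspaceT (fun x => continuous_comp (fc x) (@norm_continuous _ R^o _))).
exists `|f c|; first by rewrite normr_gt0 f0.
by move=> x Kx; apply: cmin; rewrite inE.
Qed.

Lemma compact_closure_box {R : realType} {n} {A : set 'rV[R]_n} (M : 'I_n -> R) :
  (forall s, A s -> forall i, `|s 0 i| <= M i) -> compact (closure A).
Proof.
move=> AM; pose B := [set v : 'rV[R]_n | forall i, `[- M i, M i]%classic (v 0 i)].
have Bc : compact B :=
  @rV_compact R n (fun i => `[- M i, M i]%classic)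
    (fun i => @segment_compact R (- M i) (M i)).
have Bcl : closed B := compact_closed (@norm_hausdorff _ _) Bc.
apply: (subclosed_compact _ Bc); first exact: closed_closure.
have AB : A `<=` B by move=> s /AM sM i; rewrite /= in_itv /= -ler_norml.
by move=> s /(closureS AB) /Bcl.
Qed.

Lemma ler_mx_norm_entry {R : realDomainType} {m n} (x : 'M[R]_(m, n)) i j :
  `|x i j| <= `|x|.
Proof.
change (`|x i j| <= mx_norm x); rewrite mx_normrE.
by apply/bigmax_geP; right; exists (i, j).
Qed.

Lemma vcoordE {R : realType} {n} (x : 'rV[R]_n) (i : 'I_n) : vcoord x i = x 0 i.
Proof.
rewrite /vcoord; case: insubP => [j _ /= ji|]; last by rewrite ltn_ord.
by congr (x 0 _); apply: val_inj.
Qed.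

Lemma homogeneous_even_scale {R : realType} {n} {phi : 'rV[R]_n -> R[i]}
    (c : R) (xi : 'rV[R]_n) :
  homogeneous phi -> even_fun phi -> c != 0 -> xi != 0 -> phi (c *: xi) = phi xi.
Proof.
move=> hom ev c0 xi0; have [c_gt0|c_le0] := ltrP 0 c; first exact: hom.
have c_lt0 : c < 0 by rewrite lt_neqAle c0.
rewrite -[c]opprK scaleNr ev ?hom ?oppr_gt0 //.
by rewrite scaler_eq0 negb_or oppr_eq0 c0.
Qed.

Section Cumprod.
Context {R : realType} {m : nat}.
Implicit Types (s : 'rV[R]_m) (xi : 'rV[R]_m.+1).

Definition cumprod s : 'rV[R]_m.+1 :=
  \row_(j < m.+1) \prod_(i < m | (i < j)%N) s 0 i.

Lemma psi_of_cumprod (phi : 'rV[R]_m.+1 -> R[i]) s :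
  psi_of phi s = phi (cumprod s).
Proof. by []. Qed.

Lemma cumprod00 s : cumprod s 0 0 = 1.
Proof. by rewrite mxE big_pred0. Qed.

Lemma cumprod_neq0 s : cumprod s != 0.
Proof.
by apply: contra_neq (@oner_neq0 R) => s0; rewrite -(cumprod00 s) s0 mxE.
Qed.

Lemma cumprod_lift s (i : 'I_m) :
  cumprod s 0 (lift ord0 i) = cumprod s 0 (widen_ord (leqnSn m) i) * s 0 i.
Proof.
rewrite !mxE /= (bigD1 i) //= mulrC; congr (_ * _); apply: eq_bigl => k.
by rewrite ltnS ltn_neqAle andbC.
Qed.

Lemma continuous_cumprod : continuous cumprod.
Proof.
apply: continuous_mx => i j; under eq_fun do rewrite mxE.
apply: continuous_big => [|k _]; first exact: mul_continuous.
exact: coord_continuous.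
Qed.

Lemma ler_cumprod_entry s (i : 'I_m) :
  `|cumprod s 0 (widen_ord (leqnSn m) i)| * `|s 0 i| <= `|cumprod s|.
Proof. by rewrite -normrM -cumprod_lift ler_mx_norm_entry. Qed.

Lemma cumprod_ratios xi :
  (0 < m)%N -> (forall k, (k < m)%N -> vcoord xi k != 0) ->
  cumprod (ratios xi) = (xi 0 0)^-1 *: xi.
Proof.
move=> m_gt0 xi0; have xi00 : vcoord xi 0 = xi 0 0 := vcoordE xi 0.
apply/rowP => j; rewrite !mxE.
have -> : \prod_(i < m | (i < j)%N) ratios xi 0 i =
    \prod_(0 <= k < j) (vcoord xi k.+1 / vcoord xi k).
  rewrite big_mkord.
  rewrite (big_ord_widen m (fun k => vcoord xi k.+1 / vcoord xi k) (ltn_ord j)).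
  by apply: eq_bigr => i _; rewrite mxE.
have [j0|j_gt0] := posnP j.
  have -> : j = 0 by apply: val_inj.
  by rewrite big_geq // mulVf // -xi00 xi0.
rewrite (telescope_prodr_eq (fun k => (vcoord xi k)^-1)
  (fun k => vcoord xi k.+1 / vcoord xi k) j_gt0).
- by rewrite invrK xi00 vcoordE.
- move=> k /andP[_ kj]; rewrite unitfE invr_eq0 xi0 //.
  exact: leq_trans kj (ltn_ord j).
- by move=> k _; rewrite invrK mulrC.
Qed.

End Cumprod.

Section SuppSphere.
Context {R : realType} {n : nat} (phi : 'rV[R]_n -> R[i]).

Definition supp_sphere : set 'rV[R]_n :=
  closure [set xi | xi != 0 /\ phi xi != 0] `&` [set w | `|w| = 1].

Lemma compact_supp_sphere : compact supp_sphere.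
Proof.
apply: bounded_closed_compact.
  apply: (filterS _ (nbhs_pinfty_ge (@real1 R))) => M M1 w [_ w1].
  by rewrite /= w1.
apply: closedI; first exact: closed_closure.
apply: (@preimage_closed _ _ (fun w : 'rV[R]_n => `|w|) [set x : R | x = 1]).
  by move=> x _; exact: norm_continuous.
exact: closed_eq.
Qed.

Lemma supp_sphere_supp : supp_sphere `<=` supp phi.
Proof.
move=> w [Ew w1]; split => //; apply: contra_eqN w1 => /eqP ->.
by rewrite normr0 eq_sym oner_eq0.
Qed.

Lemma supp_sphere_coord_ge {i : 'I_n} :
  supp phi `&` [set xi | vcoord xi i = 0] = set0 ->
  exists2 d, 0 < d & forall w, supp_sphere w -> d <= `|w 0 i|.
Proof.
move=> supp_i; apply: compact_abs_bounded_below compact_supp_sphere _ _.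
  exact: coord_continuous.
move=> w Kw; apply/eqP => wi0.
have : (supp phi `&` [set xi | vcoord xi i = 0]) w.
  by split; [exact: supp_sphere_supp | rewrite /= vcoordE].
by rewrite supp_i.
Qed.

Lemma homogeneous_supp_sphere {xi} :
  homogeneous phi -> xi != 0 -> phi xi != 0 -> supp_sphere (`|xi|^-1 *: xi).
Proof.
move=> hom xi0 phi0; have xi_gt0 : 0 < `|xi| by rewrite normr_gt0.
split; last by rewrite /= normrZ gtr0_norm ?invr_gt0 // mulVf // gt_eqF.
apply: subset_closure; split; last by rewrite hom // invr_gt0.
by rewrite scaler_eq0 negb_or invr_eq0 (gt_eqF xi_gt0).
Qed.

End SuppSphere.

Lemma cumprod_support_bounded {R : realType} {m} {phi : 'rV[R]_m.+1 -> R[i]} :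
  homogeneous phi ->
  (forall k, (k < m)%N -> supp phi `&` [set xi | vcoord xi k = 0] = set0) ->
  exists M : 'I_m -> R,
    forall s, phi (cumprod s) != 0 -> forall i, `|s 0 i| <= M i.
Proof.
move=> hom hsupp.
have /boolp.choice[d hd] : forall i : 'I_m, exists d : R, 0 < d /\
    forall w, supp_sphere phi w -> d <= `|w 0 (widen_ord (leqnSn m) i)|.
  move=> i; have [d d_gt0 dK] :=
    supp_sphere_coord_ge phi (i := widen_ord (leqnSn m) i) (hsupp i (ltn_ord i)).
  by exists d.
exists (fun i => (d i)^-1) => s phi_s i; have [d_gt0 dK] := hd i.
have c_gt0 : 0 < `|cumprod s| by rewrite normr_gt0 cumprod_neq0.
have := dK _ (homogeneous_supp_sphere phi hom (cumprod_neq0 s) phi_s).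
rewrite mxE normrM gtr0_norm ?invr_gt0 // => d_le.
rewrite -(ler_pM2l d_gt0) mulfV ?gt_eqF //.
apply: le_trans (ler_wpM2r (normr_ge0 _) d_le) _.
rewrite -mulrA -(mulVf (lt0r_neq0 c_gt0)).
by apply: ler_wpM2l; [rewrite invr_ge0 ltW | exact: ler_cumprod_entry].
Qed.

Theorem proposition4p2 (R : realType) (n : nat) (phi : 'rV[R]_n -> R[i]) :
  (2 <= n)%N ->
  {within punctured n, continuous phi} ->
  homogeneous phi ->
  even_fun phi ->
  (forall k : nat, (k < n.-1)%N ->
     supp phi `&` [set xi | vcoord xi k = 0] = set0) ->
  [/\ continuous (psi_of phi),
      compact (closure [set s | psi_of phi s != 0]) &
      forall xi : 'rV[R]_n,
        (forall k : nat, (k < n.-1)%N -> vcoord xi k != 0) ->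
        phi xi = psi_of phi (ratios xi)].
Proof.
case: n phi => [//|m] phi m_gt0 phic hom ev hsupp; split.
- exact: continuous_within_comp phic continuous_cumprod cumprod_neq0.
- have [M hM] := cumprod_support_bounded hom hsupp.
  exact: compact_closure_box hM.
- move=> xi xi0; rewrite psi_of_cumprod cumprod_ratios //.
  have xi00 : xi 0 0 != 0 by rewrite -(vcoordE xi 0) xi0.
  have xi_neq0 : xi != 0 by apply: contra_neq xi00 => ->; rewrite mxE.
  by rewrite homogeneous_even_scale ?invr_eq0.
Qed.
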